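(* Let $\mathbb{W}$ be a subgroup of the finite group $\mathbb{W}_2$ that contains the group $\mathbb{W}_2^{\mathfrak{A}}$, and let $G$ be a $\mathbb{W}$-invariant finite subgroup of $\mathbb{T}_2$. Then there exists $n\in\mathbb{N}$ such that one of the following three possibilities holds: \begin{enumerate} \item $G\cong\mu_n^3$; \item $n$ is even and $G\cong\mu_{n}^2\times\mu_{\frac{n}{2}}$; \item $n$ is even and $G\cong\mu_{n}\times\mu_{\frac{n}{2}}^2$. \end{enumerate} Here $\mu_k$ denotes the cyclic group of order $k$.
   Context: $\mathbb{T}_2=\mathbb{G}_m^3=\mathrm{Spec}\,\mathbb{C}[M_2]$ with $M_2=\mathbb{Z}^3$, and $\mathrm{GL}_3(\mathbb{Z})=\mathrm{GL}(M_2)$ acts on $\mathbb{T}_2$ by group automorphisms (a matrix $A$ acting via $\chi^m\mapsto\chi^{A(m)}$ on characters). $\mathbb{W}_2\subset\mathrm{GL}_3(\mathbb{Z})$ is the group generated by the permutation matrices and the diagonal sign matrices $\mathrm{diag}(-1,1,1)$, $\mathrm{diag}(1,-1,1)$, $\mathrm{diag}(1,1,-1)$; $\mathbb{W}_2\cong\mathfrak{S}_4\times\mu_2$. $\mathbb{W}_2^{\mathfrak{A}}$ is its unique subgroup isomorphic to $\mathfrak{A}_4$, generated by the permutation matrices of order $3$ together with $\mathrm{diag}(-1,-1,1)$ and $\mathrm{diag}(-1,1,-1)$. *)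

From HB Require Import structures.
From mathcomp Require Import all_boot all_order all_algebra all_fingroup.
Set Implicit Arguments. Unset Strict Implicit. Unset Printing Implicit Defensive.
Import Order.TTheory GRing.Theory Num.Theory.
Local Open Scope ring_scope.

Definition i0 : 'I_3 := @Ordinal 3 0 isT.
Definition i1 : 'I_3 := @Ordinal 3 1 isT.
Definition i2 : 'I_3 := @Ordinal 3 2 isT.

(* Points of the torus T_2 = G_m^3 over C, as row vectors with (nonzero) entries. *)
Definition pt (C : fieldType) := 'rV[C]_3.

Definition in_torus (C : fieldType) (t : pt C) : Prop := forall i, t 0 i != 0.
Definition tone (C : fieldType) : pt C := const_mx 1.
Definition tmul (C : fieldType) (t s : pt C) : pt C := \row_i (t 0 i * s 0 i).
Definition tinv (C : fieldType) (t : pt C) : pt C := \row_i (t 0 i)^-1.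

(* Action of A in GL_3(Z) = GL(M_2) on T_2: the automorphism phi_A with
   phi_A^*(chi^m) = chi^(A m), i.e. phi_A(t)_i = prod_j t_j^(A_ji). *)
Definition tact (C : fieldType) (A : 'M[int]_3) (t : pt C) : pt C :=
  \row_i \prod_(j < 3) (t 0 j) ^ (A j i).

Definition finite_subgroup (C : fieldType) (G : pt C -> Prop) : Prop :=
  [/\ exists s : seq (pt C), forall t, G t <-> t \in s,
      forall t, G t -> in_torus t,
      G (tone C),
      forall t s, G t -> G s -> G (tmul t s)
    & forall t, G t -> G (tinv t)].

Inductive gen_grp (S : 'M[int]_3 -> Prop) : 'M[int]_3 -> Prop :=
| gen_one : gen_grp S 1%:M
| gen_in A : S A -> gen_grp S A
| gen_mul A B : gen_grp S A -> gen_grp S B -> gen_grp S (A *m B)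
| gen_inv A : gen_grp S A -> gen_grp S (invmx A).

Definition diag3 (a b c : int) : 'M[int]_3 :=
  \matrix_(i, j) if i == j then [:: a; b; c]`_i else 0.

Definition W2_gens (A : 'M[int]_3) : Prop :=
  (exists s : 'S_3, A = perm_mx s) \/
  A = diag3 (-1) 1 1 \/ A = diag3 1 (-1) 1 \/ A = diag3 1 1 (-1).
Definition W2 := gen_grp W2_gens.

Definition W2A_gens (A : 'M[int]_3) : Prop :=
  (exists s : 'S_3, #[s]%g = 3%N /\ A = perm_mx s) \/
  A = diag3 (-1) (-1) 1 \/ A = diag3 (-1) 1 (-1).
Definition W2A := gen_grp W2A_gens.

Definition is_subgroup (W : 'M[int]_3 -> Prop) : Prop :=
  [/\ W 1%:M, forall A B, W A -> W B -> W (A *m B) & forall A, W A -> W (invmx A)].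

Definition in_mu3 (C : fieldType) (a b c : nat) (x : pt C) : Prop :=
  [/\ x 0 i0 ^+ a = 1, x 0 i1 ^+ b = 1 & x 0 i2 ^+ c = 1].

Definition iso_mu3 (C : fieldType) (G : pt C -> Prop) (a b c : nat) : Prop :=
  exists f : pt C -> pt C,
  [/\ forall x, in_mu3 a b c x -> G (f x),
      forall x y, in_mu3 a b c x -> in_mu3 a b c y -> f x = f y -> x = y,
      forall g, G g -> exists2 x, in_mu3 a b c x & f x = g
    & forall x y, in_mu3 a b c x -> in_mu3 a b c y -> f (tmul x y) = tmul (f x) (f y)].

(* The first coordinates of the points of G form a finite subgroup of C^*,
   i.e. the group mu_m of m-th roots of unity, and by cyclic invariance the
   same holds for every coordinate, so G lies in mu_m^3. Likewise G meets the
   first coordinate axis in mu_k, so G contains mu_k^3 and k divides m.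
   Multiplying a point (b, c, x) of G by its image (b^-1, c^-1, x) under
   diag(-1,-1,1) shows (1, 1, x^2) is in G, so squares of elements of mu_m lie
   in mu_k and m = k or m = 2k. If m = k then G = mu_k^3. If m = 2k then G is
   the full preimage of its image under the sign map x |-> x^k from mu_m^3 to
   {1,-1}^3. That image is a nonzero, rotation-invariant subgroup of F_2^3
   with no vector of weight one (if (a, 1, 1) is in G then a is in mu_k), so it
   is either the diagonal or the even-weight subgroup; these give
   mu_m x mu_k x mu_k and mu_m x mu_m x mu_k respectively. *)

From mathcomp Require Import all_boot all_algebra all_fingroup cyclic.
Import GRing.Theory.
Set Implicit Arguments. Unset Strict Implicit. Unset Printing Implicit Defensive.
Local Open Scope ring_scope.

Definition pt3 (C : fieldType) (a b c : C) : pt C := \row_i [:: a; b; c]`_i.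

Section Coordinates.

Variable C : fieldType.
Implicit Types (a b c : C) (t : pt C).

Lemma pt3E0 a b c : pt3 a b c 0 i0 = a. Proof. by rewrite mxE. Qed.
Lemma pt3E1 a b c : pt3 a b c 0 i1 = b. Proof. by rewrite mxE. Qed.
Lemma pt3E2 a b c : pt3 a b c 0 i2 = c. Proof. by rewrite mxE. Qed.
Definition pt3E := (pt3E0, pt3E1, pt3E2).

Lemma pt3_eta t : t = pt3 (t 0 i0) (t 0 i1) (t 0 i2).
Proof.
apply/rowP => i; rewrite mxE.
by case: i => [[|[|[|i]]] Hi] //=; congr (t 0 _); apply/val_inj.
Qed.

Lemma pt3_inj a b c a' b' c' :
  pt3 a b c = pt3 a' b' c' -> [/\ a = a', b = b' & c = c'].
Proof.
move=> e; have coord i : pt3 a b c 0 i = pt3 a' b' c' 0 i by rewrite e.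
by split; [have := coord i0 | have := coord i1 | have := coord i2]; rewrite !pt3E.
Qed.

Lemma tmul_pt3 a b c a' b' c' :
  tmul (pt3 a b c) (pt3 a' b' c') = pt3 (a * a') (b * b') (c * c').
Proof. by apply/rowP => i; rewrite !mxE; case: i => [[|[|[|i]]] Hi]. Qed.

Lemma tone_pt3 : tone C = pt3 1 1 1.
Proof. by apply/rowP => i; rewrite !mxE; case: i => [[|[|[|i]]] Hi]. Qed.

Lemma tactE (A : 'M[int]_3) t i :
  tact A t 0 i = t 0 i0 ^ (A i0 i) * t 0 i1 ^ (A i1 i) * t 0 i2 ^ (A i2 i).
Proof.
rewrite mxE !big_ord_recl big_ord0 mulr1 mulrA.
by congr (t 0 _ ^ A _ i * t 0 _ ^ A _ i * t 0 _ ^ A _ i); apply/val_inj.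
Qed.

End Coordinates.

Definition cyc3 : 'S_3 := perm (@ordS_inj 3).

Lemma cyc3_order : #[cyc3]%g = 3%N.
Proof.
have cyc3_cube : (cyc3 ^+ 3 = 1)%g.
  apply/permP => i; rewrite !expgSr expg0 mul1g !permM !permE.
  by case: i => [[|[|[|i]]] Hi] //=; apply/val_inj.
have : #[cyc3]%g != 1%N.
  rewrite order_eq1; apply/eqP => /permP /(_ ord0).
  by rewrite permE perm1 => /(congr1 val).
have : (#[cyc3]%g %| 3)%N by rewrite order_dvdn cyc3_cube.
by case: #[cyc3]%g => [|[|[|[|n]]]].
Qed.

Lemma tact_cyc3 (C : fieldType) (a b c : C) :
  tact (perm_mx cyc3) (pt3 a b c) = pt3 c a b.
Proof.
apply/rowP => i; rewrite tactE !pt3E !mxE !permE.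
by case: i => [[|[|[|i]]] Hi] //=; rewrite ?expr0z ?expr1z ?mul1r ?mulr1.
Qed.

Lemma tact_inv12 (C : fieldType) (a b c : C) :
  tact (diag3 (-1) (-1) 1) (pt3 a b c) = pt3 a^-1 b^-1 c.
Proof.
apply/rowP => i; rewrite tactE !pt3E !mxE.
by case: i => [[|[|[|i]]] Hi] //=; rewrite ?expr0z ?expr1z ?exprN1 ?mul1r ?mulr1.
Qed.

Section UnityRoots.

Variable F : fieldType.
Implicit Types (x : F) (rs : seq F).

Lemma unity_neq0 n x : (0 < n)%N -> x ^+ n = 1 -> x != 0.
Proof.
move=> n_gt0; apply: contra_eqN => /eqP ->.
by rewrite expr0n gtn_eqF // eq_sym oner_eq0.
Qed.

Lemma mulr_closed_unityE rs :
  uniq rs -> 1 \in rs -> (forall x, x \in rs -> x != 0) ->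
  (forall x y, x \in rs -> y \in rs -> x * y \in rs) ->
  forall x, (x \in rs) = (x ^+ size rs == 1).
Proof.
move=> rs_uniq rs1 rs_neq0 rsM.
have rs_unity x : x \in rs -> x ^+ size rs = 1.
  move=> xrs; have x_neq0 := rs_neq0 x xrs.
  have xrs_uniq : uniq (map ( *%R x) rs) by rewrite map_inj_uniq //; exact: mulfI.
  have xrs_sub : {subset map ( *%R x) rs <= rs}.
    by move=> _ /mapP [y yrs ->]; exact: rsM.
  have [_ xrs_eq] := uniq_min_size xrs_uniq xrs_sub (eq_leq (esym (size_map _ _))).
  have prod_neq0 : \prod_(y <- rs) y != 0 by rewrite prodf_seq_neq0; apply/allP.
  (* \prod_(y <- rs) y = \prod_(y <- rs) (x * y) = x ^+ size rs * \prod_(y <- rs) y *)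
  apply: (mulIf prod_neq0); rewrite mul1r.
  rewrite -{2}(perm_big _ (uniq_perm xrs_uniq rs_uniq xrs_eq)) big_map big_split /=.
  by rewrite big_const_seq count_predT iter_mulr_1.
move=> x; apply/idP/eqP => [/rs_unity // | xn]; apply: contraT => xNrs.
have rs_gt0 : (0 < size rs)%N by case: (rs) rs1.
have /max_unity_roots : all (size rs).-unity_root (x :: rs).
  rewrite /= unity_rootE xn eqxx; apply/allP => y /rs_unity.
  by rewrite unity_rootE => ->.
by move=> /(_ rs_gt0); rewrite /= xNrs rs_uniq ltnn => /(_ isT).
Qed.

Lemma unity_roots_dvdn rs k m : (0 < k)%N -> uniq rs -> size rs = k ->
  (forall x, x \in rs -> x ^+ k = 1 /\ x ^+ m = 1) -> (k %| m)%N.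
Proof.
move=> k_gt0 rs_uniq rs_size rs_unity; apply: contraT; rewrite /dvdn -lt0n => mk_gt0.
have rs_unity_mod : all (m %% k).-unity_root rs.
  apply/allP => x /rs_unity [xk xm]; rewrite unity_rootE.
  by rewrite -xm {2}(divn_eq m k) exprD mulnC exprM xk expr1n mul1r.
by have := max_unity_roots mk_gt0 rs_unity_mod rs_uniq; rewrite rs_size leqNgt ltn_pmod.
Qed.

End UnityRoots.

Lemma rotation_invariant_codes (E : bool -> bool -> bool -> bool) x0 y0 z0 :
  (forall x y z x' y' z', E x y z -> E x' y' z' -> E (x (+) x') (y (+) y') (z (+) z')) ->
  (forall x y z, E x y z -> E z x y) ->
  ~~ E true false false -> E x0 y0 z0 -> x0 || y0 || z0 ->
  (forall x y z, E x y z = (x == y) && (y == z)) \/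
  (forall x y z, E x y z = ~~ (x (+) y (+) z)).
Proof.
move=> Eadd Erot E100 E0 nz0.
have E000 : E false false false by have := Eadd _ _ _ _ _ _ E0 E0; rewrite !addbb.
have E010 : E false true false = false by apply/negbTE; apply: contra E100 => /Erot/Erot.
have E001 : E false false true = false by apply/negbTE; apply: contra E100 => /Erot.
move/negbTE: E100 => E100.
have [E111 | /negbTE E111] := boolP (E true true true).
  left => x y z; apply/idP/idP; last by case: x y z => [] [] [].
  case: x y z => [] [] [] //=; rewrite ?E100 ?E010 ?E001 // => Exyz;
  by have /= := Eadd _ _ _ _ _ _ Exyz E111; rewrite ?E100 ?E010 ?E001.
have E110 : E true true false.
  case: x0 y0 z0 nz0 E0 => [] [] [] // _; rewrite ?E100 ?E010 ?E001 ?E111 //.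
    exact: Erot.
  by move=> /Erot /Erot.
right => x y z; apply/idP/idP.
  by case: x y z => [] [] []; rewrite ?E100 ?E010 ?E001 ?E111.
case: x y z => [] [] [] //= _.
  by apply/Erot/Erot.
by apply/Erot.
Qed.

Section Isomorphisms.

Variables (C : fieldType) (G : pt C -> Prop).

Lemma iso_mu3_pt3 n1 n2 n3 (f : C -> C -> C -> pt C) :
  (forall a b c, in_mu3 n1 n2 n3 (pt3 a b c) -> G (f a b c)) ->
  (forall a b c a' b' c', in_mu3 n1 n2 n3 (pt3 a b c) -> in_mu3 n1 n2 n3 (pt3 a' b' c') ->
    f a b c = f a' b' c' -> [/\ a = a', b = b' & c = c']) ->
  (forall a b c, G (pt3 a b c) ->
    exists a' b' c', in_mu3 n1 n2 n3 (pt3 a' b' c') /\ f a' b' c' = pt3 a b c) ->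
  (forall a b c a' b' c', f (a * a') (b * b') (c * c') = tmul (f a b c) (f a' b' c')) ->
  iso_mu3 G n1 n2 n3.
Proof.
move=> f_in f_inj f_onto f_mul; exists (fun t => f (t 0 i0) (t 0 i1) (t 0 i2)); split.
- by move=> x; rewrite [x]pt3_eta !pt3E; apply: f_in.
- move=> x y; rewrite [x]pt3_eta [y]pt3_eta !pt3E => x_mu y_mu fxy.
  by case: (f_inj _ _ _ _ _ _ x_mu y_mu fxy) => -> -> ->.
- move=> t; rewrite [t]pt3_eta => /f_onto [a [b [c [abc_mu <-]]]].
  by exists (pt3 a b c); rewrite ?pt3E.
- by move=> x y _ _; rewrite [x]pt3_eta [y]pt3_eta tmul_pt3 !pt3E f_mul.
Qed.

Lemma iso_mu3_cube n :
  (forall a b c, G (pt3 a b c) <-> in_mu3 n n n (pt3 a b c)) -> iso_mu3 G n n n.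
Proof.
move=> GE; apply: (@iso_mu3_pt3 _ _ _ (@pt3 C)) => [a b c /GE //|||].
- by move=> a b c a' b' c' _ _ /pt3_inj.
- by move=> a b c /GE abc_mu; exists a, b, c.
- by move=> *; rewrite tmul_pt3.
Qed.

Lemma iso_mu3_diag k : (0 < k)%N ->
  (forall a b c, G (pt3 a b c) <->
     in_mu3 k.*2 k.*2 k.*2 (pt3 a b c) /\ (a ^+ k == b ^+ k) && (b ^+ k == c ^+ k)) ->
  iso_mu3 G k.*2 k k.
Proof.
move=> k_gt0 GE; have k2_gt0 : (0 < k.*2)%N by rewrite double_gt0.
apply: (@iso_mu3_pt3 _ _ _ (fun a b c => pt3 a (a * b) (a * c))).
- move=> a b c; rewrite /in_mu3 !pt3E => -[a2k bk ck]; apply/GE; rewrite /in_mu3 !pt3E.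
  have [b2k c2k] : b ^+ k.*2 = 1 /\ c ^+ k.*2 = 1.
    by rewrite -muln2 !exprM bk ck expr1n.
  by rewrite !exprMn a2k b2k c2k bk ck !mulr1 !eqxx.
- move=> a b c a' b' c' []; rewrite !pt3E => a2k _ _ _ /pt3_inj [<- eb ec].
  have a_neq0 := unity_neq0 k2_gt0 a2k.
  by split; [| exact: (mulfI a_neq0 eb) | exact: (mulfI a_neq0 ec)].
- move=> a b c /GE []; rewrite /in_mu3 !pt3E => -[a2k _ _] /andP [/eqP ab /eqP bc].
  have a_neq0 := unity_neq0 k2_gt0 a2k.
  have divaK x : a * (x / a) = x by rewrite mulrC divfK.
  exists a, (b / a), (c / a); rewrite /in_mu3 !pt3E !divaK !expr_div_n -bc -ab.
  by rewrite divff ?expf_neq0.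
- by move=> *; rewrite tmul_pt3; congr pt3; apply: mulrACA.
Qed.

Lemma iso_mu3_even k : (0 < k)%N ->
  (forall a b c, G (pt3 a b c) <->
     in_mu3 k.*2 k.*2 k.*2 (pt3 a b c) /\ (a * b * c) ^+ k == 1) ->
  iso_mu3 G k.*2 k.*2 k.
Proof.
move=> k_gt0 GE; have k2_gt0 : (0 < k.*2)%N by rewrite double_gt0.
have mu2_neq0 (a b : C) : a ^+ k.*2 = 1 -> b ^+ k.*2 = 1 -> a * b != 0.
  by move=> a2k b2k; rewrite mulf_neq0 ?(unity_neq0 k2_gt0).
apply: (@iso_mu3_pt3 _ _ _ (fun a b c => pt3 a b (c / (a * b)))).
- move=> a b c; rewrite /in_mu3 !pt3E => -[a2k b2k ck]; apply/GE; rewrite /in_mu3 !pt3E.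
  have c2k : c ^+ k.*2 = 1 by rewrite -muln2 exprM ck expr1n.
  rewrite [_ * (c / _)]mulrC divfK ?mu2_neq0 // ck expr_div_n exprMn a2k b2k c2k.
  by rewrite mulr1 divr1 eqxx.
- move=> a b c a' b' c' []; rewrite !pt3E => a2k b2k _ _ /pt3_inj [<- <-].
  by move/(mulIf (invr_neq0 (mu2_neq0 a b a2k b2k))).
- move=> a b c /GE []; rewrite /in_mu3 !pt3E => -[a2k b2k _] abck.
  exists a, b, (c * (a * b)); rewrite /in_mu3 !pt3E mulfK ?mu2_neq0 //.
  by rewrite mulrC (eqP abck).
- by move=> *; rewrite tmul_pt3 mulf_div mulrACA.
Qed.

End Isomorphisms.

Section InvariantFiniteSubgroup.

Variables (C : fieldType) (G : pt C -> Prop) (s : seq (pt C)).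
Hypothesis memG : forall t, G t <-> t \in s.
Hypothesis G_torus : forall t, G t -> in_torus t.
Hypothesis G1 : G (tone C).
Hypothesis G_mul : forall t u, G t -> G u -> G (tmul t u).
Hypothesis G_cyc : forall a b c, G (pt3 a b c) -> G (pt3 c a b).
Hypothesis G_inv12 : forall a b c, G (pt3 a b c) -> G (pt3 a^-1 b^-1 c).

Implicit Types (a b c x y : C).

Lemma G3_mul a b c a' b' c' :
  G (pt3 a b c) -> G (pt3 a' b' c') -> G (pt3 (a * a') (b * b') (c * c')).
Proof. by rewrite -tmul_pt3; apply: G_mul. Qed.

Lemma G3_neq0 a b c : G (pt3 a b c) -> [/\ a != 0, b != 0 & c != 0].
Proof.
by move=> /G_torus Gt; split; [have := Gt i0 | have := Gt i1 | have := Gt i2]; rewrite !pt3E.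
Qed.

Lemma G3_1 : G (pt3 1 1 1). Proof. by rewrite -tone_pt3. Qed.

Lemma G3_cyc2 a b c : G (pt3 a b c) -> G (pt3 b c a). Proof. by move/G_cyc/G_cyc. Qed.

Let proj := undup [seq t 0 i0 | t : pt C <- s].
Let axis := undup [seq t 0 i0 | t : pt C <- s & (t 0 i1 == 1) && (t 0 i2 == 1)].
Let m := size proj.
Let k := size axis.

Lemma mem_proj x : x \in proj <-> exists b c, G (pt3 x b c).
Proof.
rewrite mem_undup; split => [/mapP [t /memG Gt ->] | [b [c /memG Gx]]].
  by exists (t 0 i1), (t 0 i2); rewrite -pt3_eta.
by apply/mapP; exists (pt3 x b c); rewrite ?pt3E.
Qed.

Lemma mem_axis x : x \in axis <-> G (pt3 x 1 1).
Proof.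
rewrite mem_undup; split => [/mapP [t] | /memG Gx].
  rewrite mem_filter => /andP [/andP [/eqP t1 /eqP t2] /memG Gt] ->.
  by rewrite [t]pt3_eta t1 t2 in Gt.
by apply/mapP; exists (pt3 x 1 1); rewrite ?mem_filter !pt3E ?eqxx.
Qed.

Lemma mem1_proj : 1 \in proj.
Proof. by apply/mem_proj; exists 1, 1; apply: G3_1. Qed.

Lemma mem1_axis : 1 \in axis.
Proof. by apply/mem_axis; apply: G3_1. Qed.

Lemma projE x : (exists b c, G (pt3 x b c)) <-> x ^+ m = 1.
Proof.
have proj_neq0 y : y \in proj -> y != 0 by move=> /mem_proj [b [c /G3_neq0 []]].
have projM y z : y \in proj -> z \in proj -> y * z \in proj.
  move=> /mem_proj [b [c Gy]] /mem_proj [b' [c' Gz]]; apply/mem_proj.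
  by exists (b * b'), (c * c'); apply: G3_mul.
have := mulr_closed_unityE (undup_uniq _) mem1_proj proj_neq0 projM x; rewrite -/m => projx.
by split => [/mem_proj | xm]; [rewrite projx => /eqP | apply/mem_proj; rewrite projx xm].
Qed.

Lemma axisE x : G (pt3 x 1 1) <-> x ^+ k = 1.
Proof.
have axis_neq0 y : y \in axis -> y != 0 by move=> /mem_axis /G3_neq0 [].
have axisM y z : y \in axis -> z \in axis -> y * z \in axis.
  move=> /mem_axis Gy /mem_axis Gz; apply/mem_axis.
  by rewrite -[1]mulr1; apply: G3_mul.
have := mulr_closed_unityE (undup_uniq _) mem1_axis axis_neq0 axisM x; rewrite -/k => axisx.
by split => [/mem_axis | xk]; [rewrite axisx => /eqP | apply/mem_axis; rewrite axisx xk].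
Qed.

Lemma G3_unity a b c : G (pt3 a b c) -> [/\ a ^+ m = 1, b ^+ m = 1 & c ^+ m = 1].
Proof.
move=> Gabc; split; apply/projE.
- by exists b, c.
- by exists c, a; apply: G3_cyc2.
- by exists a, b; apply: G_cyc.
Qed.

Lemma G3_unity_k a b c : a ^+ k = 1 -> b ^+ k = 1 -> c ^+ k = 1 -> G (pt3 a b c).
Proof.
move=> /axisE Ga /axisE /G_cyc Gb /axisE /G3_cyc2 Gc.
by have := G3_mul (G3_mul Ga Gb) Gc; rewrite !mulr1 !mul1r.
Qed.

Lemma k_gt0 : (0 < k)%N.
Proof.
by move: mem1_axis; rewrite /k; case: (axis).
Qed.

Lemma dvdn_k_m : (k %| m)%N.
Proof.
apply: unity_roots_dvdn k_gt0 (undup_uniq _) erefl _ => x /mem_axis Gx.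
by split; [apply/axisE | apply/projE; exists 1, 1].
Qed.

Lemma sqr_expk_unity x : x ^+ m = 1 -> (x ^+ k) ^+ 2 = 1.
Proof.
move=> /projE [b [c /G3_cyc2 Gbcx]]; have [b_neq0 c_neq0 _] := G3_neq0 Gbcx.
have := G3_mul Gbcx (G_inv12 Gbcx); rewrite !mulfV // => /G_cyc /axisE.
by rewrite -exprM mulnC exprM.
Qed.

Lemma m_le_double_k : (m <= k.*2)%N.
Proof.
have k2_gt0 : (0 < k.*2)%N by rewrite double_gt0 k_gt0.
apply: (max_unity_roots k2_gt0) (undup_uniq _).
apply/allP => x /mem_proj /projE /sqr_expk_unity.
by rewrite unity_rootE -muln2 exprM => ->.
Qed.

Lemma m_eq_k_or_double : m = k \/ m = k.*2.
Proof.
have m_gt0 : (0 < m)%N by move: mem1_proj; rewrite /m; case: (proj).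
have [q m_eq] := dvdnP dvdn_k_m; move: m_gt0 m_le_double_k.
rewrite m_eq -mul2n leq_pmul2r ?k_gt0 // muln_gt0 => /andP [].
by case: q {m_eq} => [|[|[|q]]] // _ _ _; [left | right]; rewrite ?mul1n.
Qed.

Lemma G3_coset a' b' c' a b c : G (pt3 a' b' c') ->
  a ^+ k = a' ^+ k -> b ^+ k = b' ^+ k -> c ^+ k = c' ^+ k -> G (pt3 a b c).
Proof.
move=> Gabc' ak bk ck; have [a'_neq0 b'_neq0 c'_neq0] := G3_neq0 Gabc'.
have -> : pt3 a b c = pt3 (a' * (a / a')) (b' * (b / b')) (c' * (c / c')).
  by rewrite ![_ * (_ / _)]mulrC !divfK.
by apply: G3_mul Gabc' (G3_unity_k _ _ _); rewrite expr_div_n ?ak ?bk ?ck divff ?expf_neq0.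
Qed.

Lemma G3_unity_k_of_tail a b c : G (pt3 a b c) -> b ^+ k = 1 -> c ^+ k = 1 -> a ^+ k = 1.
Proof.
move=> Gabc bk ck; apply/axisE; apply: G3_coset Gabc _ _ _ => //; by rewrite expr1n.
Qed.

Section DoubleExponent.

Hypothesis two_neq0 : (2 : C) != 0.
Hypothesis m_double : m = k.*2.

Lemma opp1_eq1 : (-1 == 1 :> C) = false.
Proof. by rewrite eq_sym -subr_eq0 opprK; apply: negbTE. Qed.

Lemma sign_eq1 (e : bool) : ((-1) ^+ e == 1 :> C) = ~~ e.
Proof. by case: e; rewrite ?eqxx ?expr1 ?opp1_eq1. Qed.

Let ksign x := x ^+ k != 1.

Lemma expk_sign x : x ^+ m = 1 -> x ^+ k = (-1) ^+ ksign x.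
Proof.
rewrite m_double -mul2n mulnC exprM => /eqP; rewrite sqrf_eq1.
by case/orP => /eqP xk; rewrite /ksign xk ?eqxx ?opp1_eq1.
Qed.

Lemma ksignM x y : x ^+ m = 1 -> y ^+ m = 1 -> ksign (x * y) = ksign x (+) ksign y.
Proof.
move=> xm ym; rewrite {1}/ksign exprMn (expk_sign xm) (expk_sign ym).
by rewrite -signr_addb sign_eq1 negbK.
Qed.

Lemma ksign_eq x y : x ^+ m = 1 -> y ^+ m = 1 -> (ksign x == ksign y) = (x ^+ k == y ^+ k).
Proof.
move=> xm ym; rewrite (expk_sign xm) (expk_sign ym).
case: (ksign x) (ksign y) => [] []; rewrite ?expr1 ?expr0 ?eqxx ?opp1_eq1 //.
by rewrite [1 == _]eq_sym opp1_eq1.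
Qed.

Lemma ksign_prod a b c : a ^+ m = 1 -> b ^+ m = 1 -> c ^+ m = 1 ->
  ~~ (ksign a (+) ksign b (+) ksign c) = ((a * b * c) ^+ k == 1).
Proof.
move=> am bm cm; have abm : (a * b) ^+ m = 1 by rewrite exprMn am bm mulr1.
by rewrite -ksignM // -ksignM // negbK.
Qed.

Let signs (x y z : bool) :=
  (x, y, z) \in [seq (ksign (t 0 i0), ksign (t 0 i1), ksign (t 0 i2)) | t : pt C <- s].

Lemma signsP (x y z : bool) :
  signs x y z <-> exists a b c, G (pt3 a b c) /\ (ksign a, ksign b, ksign c) = (x, y, z).
Proof.
rewrite /signs; split => [/mapP [t /memG Gt [-> -> ->]] | [a [b [c [/memG Gabc <-]]]]].
  by exists (t 0 i0), (t 0 i1), (t 0 i2); rewrite -pt3_eta.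
by apply/mapP; exists (pt3 a b c); rewrite ?pt3E.
Qed.

Lemma G3_signsE a b c :
  G (pt3 a b c) <-> in_mu3 m m m (pt3 a b c) /\ signs (ksign a) (ksign b) (ksign c).
Proof.
rewrite /in_mu3 !pt3E; split => [Gabc | [[am bm cm] /signsP [a' [b' [c' [Gabc' [ea eb ec]]]]]]].
  by split; [case: (G3_unity Gabc) | apply/signsP; exists a, b, c].
have [am' bm' cm'] := G3_unity Gabc'.
by apply: G3_coset Gabc' _ _ _; rewrite !expk_sign // ?ea ?eb ?ec.
Qed.

Lemma signs_add (x y z x' y' z' : bool) :
  signs x y z -> signs x' y' z' -> signs (x (+) x') (y (+) y') (z (+) z').
Proof.
move=> /signsP [a [b [c [Gabc [<- <- <-]]]]] /signsP [a' [b' [c' [Gabc' [<- <- <-]]]]].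
have [[am bm cm] [am' bm' cm']] := (G3_unity Gabc, G3_unity Gabc').
apply/signsP; exists (a * a'), (b * b'), (c * c').
by rewrite !ksignM //; split => //; exact: G3_mul.
Qed.

Lemma signs_cyc (x y z : bool) : signs x y z -> signs z x y.
Proof.
by move=> /signsP [a [b [c [/G_cyc Gcab [<- <- <-]]]]]; apply/signsP; exists c, a, b.
Qed.

Lemma signs_100 : ~~ signs true false false.
Proof.
apply/negP => /signsP [a [b [c [Gabc [ea /negbFE /eqP bk /negbFE /eqP ck]]]]].
by move: ea; rewrite /ksign (G3_unity_k_of_tail Gabc bk ck) eqxx.
Qed.

Lemma signs_nonzero : exists e2 e3 : bool, signs true e2 e3.
Proof.
have : ~~ all (fun x => x ^+ k == 1) proj.
  apply/negP => /allP proj_k.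
  have proj_unity : all k.-unity_root proj.
    by apply/allP => x /proj_k; rewrite unity_rootE.
  have := max_unity_roots k_gt0 proj_unity (undup_uniq _); rewrite -/m m_double.
  by rewrite -addnn -[leqRHS]addn0 leq_add2l leqNgt k_gt0.
case/allPn => x /mem_proj [b [c Gxbc]] xk.
by exists (ksign b), (ksign c); apply/signsP; exists x, b, c; rewrite /ksign xk.
Qed.

Lemma double_classification : iso_mu3 G m m k \/ iso_mu3 G m k k.
Proof.
have [e2 [e3 signs1]] := signs_nonzero.
have [diag | even] := rotation_invariant_codes signs_add signs_cyc signs_100 signs1 isT.
  right; rewrite m_double; apply: iso_mu3_diag k_gt0 _ => a b c.
  apply: iff_trans (G3_signsE a b c) _; rewrite -m_double diag /in_mu3 !pt3E.
  by split=> -[[am bm cm]]; rewrite !ksign_eq.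
left; rewrite m_double; apply: iso_mu3_even k_gt0 _ => a b c.
apply: iff_trans (G3_signsE a b c) _; rewrite -m_double even /in_mu3 !pt3E.
by split=> -[[am bm cm]]; rewrite ksign_prod.
Qed.

End DoubleExponent.

Lemma invariant_subgroup_classification : (2 : C) != 0 ->
  exists n : nat,
    iso_mu3 G n n n \/
    (~~ odd n /\ iso_mu3 G n n n./2) \/
    (~~ odd n /\ iso_mu3 G n n./2 n./2).
Proof.
move=> two_neq0; have [m_eq_k | m_eq_2k] := m_eq_k_or_double.
  exists k; left; apply: iso_mu3_cube => a b c; rewrite /in_mu3 !pt3E.
  by split=> [/G3_unity | []]; rewrite ?m_eq_k //; apply: G3_unity_k.
have m_even : ~~ odd m by rewrite m_eq_2k odd_double.
have m_half : m./2 = k by rewrite m_eq_2k doubleK.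
exists m; right; rewrite m_half.
by case: (double_classification two_neq0 m_eq_2k) => ?; [left | right].
Qed.

End InvariantFiniteSubgroup.

Theorem lemma7p1 (C : closedFieldType) (charC0 : [pchar C] =i pred0)
  (W : 'M[int]_3 -> Prop) (G : pt C -> Prop) :
  is_subgroup W ->
  (forall A, W A -> W2 A) ->
  (forall A, W2A A -> W A) ->
  finite_subgroup G ->
  (forall A t, W A -> G t -> G (tact A t)) ->
  exists n : nat,
    iso_mu3 G n n n \/
    (~~ odd n /\ iso_mu3 G n n n./2) \/
    (~~ odd n /\ iso_mu3 G n n./2 n./2).
Proof.
move=> _ _ W2A_W [[s memG] G_torus G1 G_mul _] G_inv.
have G_act A t : W2A_gens A -> G t -> G (tact A t) by move=> /gen_in /W2A_W /G_inv; apply.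
apply: invariant_subgroup_classification memG G_torus G1 G_mul _ _ _.
- move=> a b c /(G_act (perm_mx cyc3)); rewrite tact_cyc3; apply.
  by left; exists cyc3; rewrite cyc3_order.
- move=> a b c /(G_act (diag3 (-1) (-1) 1)); rewrite tact_inv12; apply.
  by right; left.
- by have := charC0 2; rewrite !inE /= => /negbT.
Qed.
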